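(* Let $G$ be a fullerene graph, $S$ a perfect star packing of $G$, and $C=v_0v_1\cdots v_{k-1}v_0$ a cycle in $G-C(S)$ which is a non-facial cycle of $G$, dividing $G$ into the two sides $H_1$ and $H_2$ (indices modulo $k$). Then: (i) if $v_i$ and $v_{i+1}$ both have neighbors in $H_1$ (resp. $H_2$) and $v_{i-1}$ and $v_{i+2}$ both have neighbors in $H_2$ (resp. $H_1$), then $v_{i-1},v_i,v_{i+1},v_{i+2}$ lie on a pentagonal face of $G$; (ii) if $v_i,v_{i+1},v_{i+2}$ all have neighbors in $H_1$ (resp. $H_2$) and $v_{i-1}$ and $v_{i+3}$ both have neighbors in $H_2$ (resp. $H_1$), then $v_{i-1},v_i,v_{i+1},v_{i+2},v_{i+3}$ lie on a hexagonal face of $G$; (iii) for $j\in\{1,2\}$, if $v_i$ and $v_{i+1}$ both have neighbors in $H_j$, and $e_i,e_{i+1}$ denote the edges incident to $v_i$, $v_{i+1}$ respectively that do not lie on $C$, then the face of $G$ whose boundary contains both $e_i$ and $e_{i+1}$ is a hexagon, and two antipodal vertices of this hexagon are centers of stars of $S$.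
   Context: A fullerene graph is a finite simple connected (equivalently, $3$-connected) plane cubic graph all of whose faces are pentagons or hexagons; it has an essentially unique plane embedding. A perfect star packing of $G$ is a spanning subgraph $S$ of $G$ every connected component of which is isomorphic to $K_{1,3}$; $C(S)$ denotes the set of centers (degree-$3$ vertices) of the stars in $S$. A cycle of $G$ is facial if it bounds a face, non-facial otherwise. A non-facial cycle $C$, as a Jordan curve in the plane embedding, separates the plane into two regions; $H_1$ and $H_2$ denote the subgraphs of $G$ induced by the vertices lying in the interior of each of these regions (the two sides of $C$). Two vertices of a hexagon are antipodal if they are at distance $3$ along the hexagon. *)

From mathcomp Require Import all_boot.

Set Implicit Arguments. Unset Strict Implicit. Unset Printing Implicit Defensive.

Section Fullerene.
Variable T : finType.
Variable adj : rel T.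
Variable rot : T -> T -> T.    (* rot v u = successor of neighbour u in the cyclic
                                  order of the neighbours around v (rotation system) *)

Definition darts : {set T * T} := [set d | adj d.1 d.2].

Definition faceperm (d : T * T) : T * T := (d.2, rot d.2 d.1).

(* the face (as its cyclic set of boundary darts) containing dart d *)
Definition face_of (d : T * T) : {set T * T} := [set e | fconnect faceperm d e].

Definition faces : {set {set T * T}} := [set face_of d | d in darts].

Definition face_verts (d : T * T) : {set T} := [set e.1 | e in face_of d].

Definition face_edges (d : T * T) : {set {set T}} :=
  [set [set e.1; e.2] | e in face_of d].

Definition face_has_edge (d : T * T) (x y : T) : bool :=
  ((x, y) \in face_of d) || ((y, x) \in face_of d).

Definition is_rotation_system : Prop :=
  [/\ forall x u, adj x u -> adj x (rot x u),
      forall x u w, adj x u -> adj x w -> rot x u = rot x w -> u = w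
    & forall x u w, adj x u -> adj x w -> exists n, iter n (rot x) u = w].

(* A fullerene graph with its (essentially unique) plane embedding, given by a
   rotation system of Euler characteristic 2 (genus 0, Heffter-Edmonds). *)
Definition fullerene : Prop :=
  [/\ irreflexive adj, symmetric adj,
      (forall x, #|[set y | adj x y]| = 3),
      (forall x y, connect adj x y)
    & is_rotation_system] /\
  [/\
      (2 * #|T| + 2 * #|faces| = #|darts| + 4)%N,           (* V - E + F = 2 *)
      (forall d, d \in darts ->
        (#|face_of d| == 5) || (#|face_of d| == 6))
  (* each face boundary is a cycle (no repeated vertex) *)
    & forall d, d \in darts -> #|face_verts d| = #|face_of d|].

(* A spanning subgraph of G given by its edge relation s; every component
   (for connect s) is isomorphic to K_{1,3}, with centre c. *)
Definition perfect_star_packing (s : rel T) : Prop :=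
  [/\ symmetric s, (forall x y, s x y -> adj x y)
    & forall x, exists c : T,
        let K := [set y | connect s x y] in
        [/\ c \in K, #|K| = 4
          & forall y z, y \in K -> z \in K -> s y z = (y == c) (+) (z == c)]].

Definition centers (s : rel T) : {set T} := [set x | #|[set y | s x y]| == 3].

Definition is_cycle (k : nat) (v : 'I_k -> T) : Prop :=
  [/\ (3 <= k)%N, injective v & forall i, adj (v i) (v (ordS i))].

Definition on_cycle (k : nat) (v : 'I_k -> T) (x : T) : bool :=
  [exists i, v i == x].

Definition on_cycle_edge (k : nat) (v : 'I_k -> T) (x y : T) : bool :=
  [exists i, ((x == v i) && (y == v (ordS i))) || ((y == v i) && (x == v (ordS i)))].

Definition cycle_edges (k : nat) (v : 'I_k -> T) : {set {set T}} :=
  [set [set v i; v (ordS i)] | i : 'I_k].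

Definition non_facial (k : nat) (v : 'I_k -> T) : Prop :=
  forall d, d \in darts -> face_edges d != cycle_edges v.

(* ---- the two sides of C ----
   Two darts lie on the same side of C iff one can go from one to the other
   moving along face boundaries and crossing only edges not on C.  The region
   on the side of a dart d0 is the union of the faces of the darts on d0's side;
   a vertex lies in the interior of that region iff it is not on C and is
   incident with a face of that region. *)
Definition side_step (k : nat) (v : 'I_k -> T) (d e : T * T) : bool :=
  [&& d \in darts, e \in darts &
      (e == faceperm d) || ((e == (d.2, d.1)) && ~~ on_cycle_edge v d.1 d.2)].

Definition same_side (k : nat) (v : 'I_k -> T) (d e : T * T) : bool :=
  connect (side_step v) d e.

Definition in_side (k : nat) (v : 'I_k -> T) (d0 : T * T) (x : T) : bool :=
  ~~ on_cycle v x && [exists y, adj x y && same_side v d0 (x, y)].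

Definition has_nbr_in_side (k : nat) (v : 'I_k -> T) (d0 : T * T) (x : T) : Prop :=
  exists y, adj x y /\ in_side v d0 y.

End Fullerene.

From mathcomp Require Import all_boot all_algebra zify.

Set Implicit Arguments. Unset Strict Implicit. Unset Printing Implicit Defensive.
Import GRing.Theory.

(* The third neighbour u_i of v_i lies off C and is the center of the star of
   v_i.  The rotation at v_i is either (v_{i-1}, u_i, v_{i+1}) or
   (v_{i-1}, v_{i+1}, u_i), and this orientation decides on which side of C the
   edge e_i = v_i u_i lies.  That C has two sides is a combinatorial Jordan curve
   theorem: by Euler's formula the F_2 chain complex faces -> edges -> vertices
   is exact at the edges, so the even edge set of C bounds a set of faces, which
   2-colours the faces with the colour changing exactly across C.
   The rest is face tracing.  Where the orientation changes, the face turning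
   around a run of equally oriented vertices goes from a center along C to
   another center.  In (i) it passes 4 vertices of C, and a hexagon would make
   the two centers adjacent; in (ii) it passes 5, so it has at least 6 vertices.
   In (iii) the face through u_i v_i v_{i+1} u_{i+1} is a hexagon with u_i and
   u_{i+1} antipodal, because centers are neither adjacent nor have a common
   neighbour; for the same reason the darts v_i -> u_i and u_{i+1} -> v_{i+1}
   lie on different faces, so this hexagon is the only face through both edges. *)

Section KernelRank.
Local Open Scope ring_scope.
Variable F : fieldType.

Lemma rank_kermx_le1 m n (M : 'M[F]_(m, n)) :
  (forall w : 'rV_m, w *m M = 0 -> forall i j, w 0 i = w 0 j) ->
  (\rank (kermx M) <= 1)%N.
Proof.
case: m M => [|m] M w_const; first by rewrite (leq_trans (rank_leq_row _)).
apply: leq_trans (rank_leq_row (const_mx 1 : 'rV_m.+1)).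
apply/mxrankS/row_subP => r; have := row_mul r (kermx M) M.
rewrite mulmx_ker row0; set w := row r (kermx M) => /esym w0; clearbody w.
apply/sub_rVP; exists (w 0 ord0); apply/rowP => j.
by rewrite !mxE mulr1 (w_const _ w0 j ord0).
Qed.

(* Rank-nullity on both sides: [\rank B >= m - 1] and
   [\rank (kermx A) = n - \rank A <= n - p + 1 = m - 1], so the inclusion
   [B <= kermx A] forced by [B *m A = 0] is an equality. *)
Lemma kermx_sub_euler m n p (B : 'M[F]_(m, n)) (A : 'M[F]_(n, p)) :
  B *m A = 0 -> (\rank (kermx B) <= 1)%N -> (\rank (kermx A^T) <= 1)%N ->
  (m + p = n + 2)%N -> (kermx A <= B)%MS.
Proof.
move=> BA0 kerB kerA dims.
have rkB := mxrank_ker B; have rkA := mxrank_ker A^T; rewrite mxrank_tr in rkA.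
have rkKA := mxrank_ker A; have leB := rank_leq_row B; have leA := rank_leq_col A.
have sBKA : (B <= kermx A)%MS by apply/sub_kermxP.
have [_ <-] := mxrank_leqif_sup sBKA.
by apply/eqP/anti_leq; rewrite mxrankS //=; lia.
Qed.

End KernelRank.

Lemma ordS_ind k (P : 'I_k -> Prop) (i0 : 'I_k) :
  P i0 -> (forall i, P i -> P (ordS i)) -> forall j, P j.
Proof.
move=> P0 PS j.
have iterS_val n : val (iter n (@ordS k) i0) = (i0 + n) %% k.
  elim: n => [|n IHn] /=; first by rewrite addn0 modn_small.
  by rewrite IHn -addn1 modnDml addn1 addnS.
have -> : j = iter (j + (k - i0)) (@ordS k) i0.
  apply/val_inj; rewrite iterS_val.
  have := ltn_ord i0; have := ltn_ord j => ltj lti.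
  by rewrite (_ : i0 + _ = j + k) ?modnDr ?modn_small //; lia.
by elim: (j + _) => //= n; apply: PS.
Qed.

Lemma ordS_neq_pred k (i : 'I_k) : 2 < k -> ordS i != ord_pred i.
Proof.
move=> k_gt2; apply/eqP => /(congr1 (@ordS k)); rewrite ord_predK.
move/(congr1 val) => /=; rewrite -addn1 modnDml addn1 => e.
have lt_ik := ltn_ord i.
have [lt|gt|eq] := ltngtP i.+2 k.
- by move: e; rewrite modn_small //; lia.
- by move: e; rewrite (_ : i.+2 = 1 + k) ?modnDr ?modn_small; lia.
- by move: e; rewrite eq modnn; lia.
Qed.

(** * Rotation systems of cubic graphs *)

Section PlaneCubicGraph.
Variables (T : finType) (adj : rel T) (rot : T -> T -> T).
Hypothesis adj_irr : irreflexive adj.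
Hypothesis adj_sym : symmetric adj.
Hypothesis cubic : forall x, #|[set y | adj x y]| = 3.
Hypothesis connected : forall x y, connect adj x y.
Hypothesis rot_adj : forall x u, adj x u -> adj x (rot x u).
Hypothesis rot_inj : forall x u w, adj x u -> adj x w -> rot x u = rot x w -> u = w.
Hypothesis rot_orbit : forall x u w, adj x u -> adj x w -> exists n, iter n (rot x) u = w.

Lemma iter_rot_adj x u n : adj x u -> adj x (iter n (rot x) u).
Proof. by move=> xu; elim: n => //= n; apply: rot_adj. Qed.

Lemma rot_period_ge3 x u n : adj x u -> iter n.+1 (rot x) u = u -> 2 < n.+1.
Proof.
move=> xu period.
have orbit : [set y | adj x y] \subset [set iter i (rot x) u | i : 'I_n.+1].
  apply/subsetP => w; rewrite inE => /(rot_orbit xu) [m <-].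
  elim: m => [|m]; first by apply/imsetP; exists ord0.
  case/imsetP => i _ /= ->; apply/imsetP; rewrite -iterS.
  have [lt_in|] := ltnP i.+1 n.+1; first by exists (Ordinal lt_in).
  rewrite ltnS => le_ni; exists ord0 => //=.
  by have -> : val i = n by apply/anti_leq; rewrite le_ni -ltnS ltn_ord.
rewrite -(cubic x); apply: leq_trans (subset_leq_card orbit) _.
by apply: leq_trans (leq_imset_card _ _) _; rewrite card_ord.
Qed.

Lemma rot_neq x u : adj x u -> rot x u != u.
Proof. by move=> xu; apply/eqP => /(rot_period_ge3 (n := 0) xu). Qed.

Lemma rot2_neq x u : adj x u -> rot x (rot x u) != u.
Proof. by move=> xu; apply/eqP => /(rot_period_ge3 (n := 1) xu). Qed.

Lemma cubic_nbr_cases x a b c z :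
  adj x a -> adj x b -> adj x c -> a != b -> a != c -> b != c ->
  adj x z -> [\/ z = a, z = b | z = c].
Proof.
move=> xa xb xc ab ac bc xz.
have sub : [set a; b; c] \subset [set y | adj x y].
  by apply/subsetP => y; rewrite !inE -orbA => /or3P[] /eqP ->.
have card3 : #|[set a; b; c]| = 3.
  by rewrite -setUA cardsU1 cards2 !inE bc (negbTE ab) (negbTE ac).
have [_] := subset_leqif_cards sub; rewrite cubic card3 eqxx => /esym/eqP/setP/(_ z).
by rewrite !inE -orbA xz => /or3P[] /eqP; [constructor 1|constructor 2|constructor 3].
Qed.

Lemma rot3 x u : adj x u -> rot x (rot x (rot x u)) = u.
Proof.
move=> xu; have xu1 := rot_adj xu; have xu2 := rot_adj xu1.
have ne01 : u != rot x u by rewrite eq_sym rot_neq.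
have ne02 : u != rot x (rot x u) by rewrite eq_sym rot2_neq.
have ne12 : rot x u != rot x (rot x u) by rewrite eq_sym rot_neq.
case: (cubic_nbr_cases xu xu1 xu2 ne01 ne02 ne12 (rot_adj xu2)) => //.
  by move/(rot_inj xu2 xu) => e; have := rot2_neq xu; rewrite e eqxx.
by move=> e; have := rot_neq xu2; rewrite e eqxx.
Qed.

(** * Faces *)

Local Notation fp := (faceperm rot).
Local Notation dart d := (d \in darts adj).

Lemma swap_dart d : dart (swap_pair d) = dart d.
Proof. by rewrite !inE adj_sym. Qed.

Lemma faceperm_dart d : dart d -> dart (fp d).
Proof. by rewrite !inE /= adj_sym => /rot_adj. Qed.

Lemma iter_faceperm_dart n d : dart d -> dart (iter n fp d).
Proof. by move=> dd; elim: n => //= n; apply: faceperm_dart. Qed.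

Definition faceperm_inv (d : T * T) := (rot d.1 (rot d.1 d.2), d.1).

Lemma facepermK : {in darts adj, cancel fp faceperm_inv}.
Proof. by case=> x y; rewrite inE /= => xy; rewrite /faceperm_inv /= rot3 // adj_sym. Qed.

Lemma faceperm_invK : {in darts adj, cancel faceperm_inv fp}.
Proof. by case=> x y; rewrite inE /= => xy; rewrite /faceperm_inv /faceperm /= rot3. Qed.

Lemma faceperm_inv_dart d : dart d -> dart (faceperm_inv d).
Proof. by case: d => x y; rewrite !inE /= => /rot_adj/rot_adj; rewrite adj_sym. Qed.

Lemma faceperm_inj : {in darts adj &, injective fp}.
Proof. exact: can_in_inj facepermK. Qed.

Lemma sum_darts_faceperm (R : nmodType) (G : T * T -> R) :
  (\sum_(d in darts adj) G (fp d) = \sum_(d in darts adj) G d)%R.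
Proof.
rewrite [RHS](reindex_onto fp faceperm_inv) /=; last exact: faceperm_invK.
apply: eq_bigl => d; apply/idP/andP => [dd|[/faceperm_inv_dart + /eqP <-] //].
by rewrite faceperm_dart // facepermK.
Qed.

Lemma face_card d : #|face_of rot d| = order fp d.
Proof. by rewrite /order -cardsE; apply: eq_card => e; rewrite !inE. Qed.

Lemma face_card_gt0 d : 0 < #|face_of rot d|.
Proof. by rewrite face_card order_gt0. Qed.

Lemma iter_faceperm_face n d : iter n fp d \in face_of rot d.
Proof. by rewrite inE fconnect_iter. Qed.

Lemma face_of_iter d e :
  e \in face_of rot d -> exists2 n, n < #|face_of rot d| & e = iter n fp d.
Proof.
rewrite inE => de; exists (findex fp d e); last by rewrite iter_findex.
by rewrite face_card findex_max.
Qed.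

Lemma iter_face_card d : dart d -> iter #|face_of rot d| fp d = d.
Proof. by move=> dd; rewrite face_card (iter_order_in faceperm_dart faceperm_inj). Qed.

Lemma iter_face_card_pred d : dart d -> iter #|face_of rot d|.-1 fp d = faceperm_inv d.
Proof.
move=> dd; apply: faceperm_inj; rewrite ?iter_faceperm_dart ?faceperm_inv_dart // faceperm_invK //.
by rewrite -iterS prednK ?face_card_gt0 ?iter_face_card.
Qed.

Lemma iter_faceperm_inj d m n : m < #|face_of rot d| -> n < #|face_of rot d| ->
  iter m fp d = iter n fp d -> m = n.
Proof. by rewrite face_card => lt_m lt_n e; rewrite -(findex_iter lt_m) e findex_iter. Qed.

Lemma face_of_eq d e : dart d -> e \in face_of rot d -> face_of rot e = face_of rot d.
Proof.
move=> dd de; have [n _ en] := face_of_iter de.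
have ed : dart e by rewrite en iter_faceperm_dart.
rewrite inE in de; apply/setP => z; rewrite !inE; apply/idP/idP; first exact: connect_trans.
by apply: connect_trans; rewrite (fconnect_sym_in faceperm_dart faceperm_inj ed dd).
Qed.

Lemma adj_iter_faceperm d n : dart d -> adj (iter n fp d).1 (iter n.+1 fp d).1.
Proof. by move/(iter_faceperm_dart n); rewrite inE. Qed.

Lemma face_traject d n : {subset traject fp d n <= face_of rot d}.
Proof. by move=> e /trajectP[m _ ->]; apply: iter_faceperm_face. Qed.

Lemma face_of_mem F d : F \in faces adj rot -> d \in F -> F = face_of rot d.
Proof. by case/imsetP => d' d'd -> dF; rewrite (face_of_eq d'd dF). Qed.

Lemma mem_face_faceperm F d : F \in faces adj rot -> dart d -> (fp d \in F) = (d \in F).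
Proof.
move=> FF dd; apply/idP/idP => [/(face_of_mem FF) ->|/(face_of_mem FF) ->].
  by rewrite (face_of_eq dd (iter_faceperm_face 1 d)) (iter_faceperm_face 0).
exact: (iter_faceperm_face 1).
Qed.

Lemma faceperm_swap_invariant_const (X : Type) (g : T * T -> X) :
  (forall d, dart d -> g (fp d) = g d) ->
  (forall d, dart d -> g (swap_pair d) = g d) ->
  {in darts adj &, forall d e, g d = g e}.
Proof.
move=> gfp gswap.
have around x y z : adj x y -> adj x z -> g (x, y) = g (x, z).
  move=> xy /(rot_orbit xy) [n <-]; elim: n => //= n ->.
  have xw := iter_rot_adj n xy; set w := iter n (rot x) y in xw *.
  have dxw : dart (x, w) by rewrite inE.
  by rewrite -[(x, rot x w)]/(fp (swap_pair (x, w))) gfp ?swap_dart // gswap.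
move=> [a b] [c e]; rewrite !inE /= => ab.
have /connectP [p pth ->] := connected a c.
elim: p a b ab pth => [|x p IHp] a b ab /= => [_|/andP[ax pth]]; first exact: around.
have dxa : dart (x, a) by rewrite inE adj_sym.
rewrite (around _ _ _ ab ax) -[(a, x)]/(swap_pair (x, a)) gswap //.
by apply: IHp pth; rewrite adj_sym.
Qed.

(** * A combinatorial Jordan curve theorem *)

Definition edge_reps : {set T * T} :=
  [set d | adj d.1 d.2 && (enum_rank d.1 < enum_rank d.2)].

Lemma darts_edge_reps : darts adj = edge_reps :|: swap_pair @: edge_reps.
Proof.
apply/setP => -[x y]; rewrite !inE (can2_imset_pre _ swap_pairK swap_pairK) !inE /=.
rewrite [adj y x]adj_sym; case: (boolP (adj x y)) => //= xy.
case: ltngtP => // /val_inj/enum_rank_inj eq_xy.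
by move: xy; rewrite eq_xy adj_irr.
Qed.

Lemma disjoint_edge_reps : [disjoint edge_reps & swap_pair @: edge_reps].
Proof.
rewrite -setI_eq0 (can2_imset_pre _ swap_pairK swap_pairK).
apply/eqP/setP => -[x y]; rewrite !inE /=.
by case: ltngtP; rewrite ?andbF.
Qed.

Lemma card_darts : #|darts adj| = (2 * #|edge_reps|)%N.
Proof.
rewrite darts_edge_reps cardsU (disjoint_setI0 disjoint_edge_reps) cards0 subn0.
by rewrite card_imset ?addnn ?mul2n //; apply: can_inj swap_pairK.
Qed.

Lemma sum_darts_edge_reps (R : nmodType) (G : T * T -> R) :
  (\sum_(d in darts adj) G d = \sum_(e in edge_reps) (G e + G (swap_pair e)))%R.
Proof.
rewrite big_split /= darts_edge_reps.
rewrite (eq_bigl [predU edge_reps & swap_pair @: edge_reps]); last by move=> d; rewrite !inE.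
rewrite bigU /=; last exact: disjoint_edge_reps.
by rewrite big_imset //; apply: in2W; apply: can_inj swap_pairK.
Qed.

Lemma dart_edge_rep d : dart d ->
  exists2 e, e \in edge_reps & d = e \/ d = swap_pair e.
Proof.
rewrite darts_edge_reps inE => /orP[dE|/imsetP[e eE ->]]; first by exists d; first by []; left.
by exists e => //; right.
Qed.

Hypothesis euler : (2 * #|T| + 2 * #|faces adj rot| = #|darts adj| + 4)%N.

Section FaceCut.
Local Open Scope ring_scope.

Definition F2b (b : bool) : 'F_2 := b%:R.

Lemma F2_cases (x : 'F_2) : x = 0 \/ x = 1.
Proof. by case: x => -[|[|]] // ?; [left|right]; apply/val_inj. Qed.

Lemma F2_add_eq0 (x y : 'F_2) : (x + y == 0) = (x == y).
Proof. by case: (F2_cases x) (F2_cases y) => -> [] ->. Qed.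

Lemma F2_add_F2b (x y : 'F_2) (b : bool) : x + y = F2b b -> (y == 1) = (x == 1) (+) b.
Proof. by case: b; case: (F2_cases x) (F2_cases y) => -> [] -> /eqP. Qed.

Lemma sum_mul_F2b_eq (I : finType) (r : I -> 'F_2) i0 :
  \sum_i r i * F2b (i == i0) = r i0.
Proof.
rewrite (bigD1 i0) //= eqxx mulr1 big1 ?addr0 // => i /negbTE ->.
by rewrite mulr0.
Qed.

Definition face_edge_mx : 'M['F_2]_(#|faces adj rot|, #|edge_reps|) :=
  \matrix_(i, j) (F2b ((enum_val j : T * T) \in (enum_val i : {set T * T}))
                  + F2b (swap_pair (enum_val j) \in (enum_val i : {set T * T}))).

Definition edge_vertex_mx : 'M['F_2]_(#|edge_reps|, #|T|) :=
  \matrix_(j, x) (F2b ((enum_val j : T * T).1 == enum_val x)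
                  + F2b ((enum_val j : T * T).2 == enum_val x)).

(* The set of faces [w], read off at the face containing [d]. *)
Definition face_fun (w : 'rV['F_2]_#|faces adj rot|) (d : T * T) : 'F_2 :=
  \sum_(i < #|faces adj rot|) w 0 i * F2b (d \in (enum_val i : {set T * T})).

Lemma face_fun_faceperm w d : dart d -> face_fun w (fp d) = face_fun w d.
Proof. by move=> dd; apply: eq_bigr => i _; rewrite mem_face_faceperm ?enum_valP. Qed.

Lemma face_fun_mem w d (i : 'I_#|faces adj rot|) :
  d \in (enum_val i : {set T * T}) -> face_fun w d = w 0 i.
Proof.
move=> di; rewrite /face_fun (bigD1 i) //= di mulr1 big1 ?addr0 // => j ji.
case: (boolP (d \in (enum_val j : {set T * T}))) => [dj|]; last by rewrite mulr0.
move: ji; rewrite -(inj_eq enum_val_inj).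
by rewrite (face_of_mem (enum_valP i) di) (face_of_mem (enum_valP j) dj) eqxx.
Qed.

Lemma face_edge_mx_mul (w : 'rV_#|faces adj rot|) (j : 'I_#|edge_reps|) :
  (w *m face_edge_mx) 0 j = face_fun w (enum_val j) + face_fun w (swap_pair (enum_val j)).
Proof. by rewrite mxE -big_split; apply: eq_bigr => i _; rewrite mxE mulrDr. Qed.

Lemma edge_vertex_mx_tr_mul (w : 'rV_#|T|) (j : 'I_#|edge_reps|) :
  (w *m edge_vertex_mx^T) 0 j =
    w 0 (enum_rank (enum_val j).1) + w 0 (enum_rank (enum_val j).2).
Proof.
rewrite mxE -!(sum_mul_F2b_eq (fun x => w 0 x)) -big_split.
apply: eq_bigr => x _; rewrite !mxE mulrDr.
by congr (_ * F2b _ + _ * F2b _); apply/eqP/eqP => [->|->]; rewrite ?enum_valK ?enum_rankK.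
Qed.

Lemma mul_face_edge_vertex_mx : face_edge_mx *m edge_vertex_mx = 0.
Proof.
apply/matrixP => i x; rewrite !mxE.
have Fi := enum_valP i; set F := enum_val i in Fi *; set y := enum_val x.
pose G1 (d : T * T) := F2b (d \in F) * F2b (d.1 == y).
pose G2 (d : T * T) := F2b (d \in F) * F2b (d.2 == y).
have -> : \sum_j face_edge_mx i j * edge_vertex_mx j x = \sum_(d in darts adj) (G1 d + G2 d).
  rewrite sum_darts_edge_reps (big_enum_val (A := mem edge_reps)) /=.
  apply: eq_bigr => j _; rewrite !mxE /G1 /G2 /=.
  by rewrite mulrDl !mulrDr; congr (_ + _); rewrite addrC.
rewrite big_split /= -(sum_darts_faceperm G1) (eq_bigr G2).
  by rewrite addrr_pchar2 ?(pchar_Fp (isT : prime 2)).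
by move=> d dd; rewrite /G1 mem_face_faceperm.
Qed.

Lemma rank_ker_face_edge_mx : (\rank (kermx face_edge_mx) <= 1)%N.
Proof.
apply: rank_kermx_le1 => w w0 i i'.
have fun_swap d : dart d -> face_fun w (swap_pair d) = face_fun w d.
  case/dart_edge_rep => e eE de.
  have /eqP := face_edge_mx_mul w (enum_rank_in eE e).
  rewrite w0 mxE eq_sym F2_add_eq0 enum_rankK_in // => /eqP fe.
  by case: de => ->; rewrite ?swap_pairK fe.
have face_dart (j : 'I_#|faces adj rot|) :
    exists2 d, dart d & d \in (enum_val j : {set T * T}).
  by case/imsetP: (enum_valP j) => d dd ->; exists d; rewrite ?(iter_faceperm_face 0).
have [d dd di] := face_dart i; have [d' dd' di'] := face_dart i'.
rewrite -(face_fun_mem w di) -(face_fun_mem w di').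
exact: (faceperm_swap_invariant_const (face_fun_faceperm w) fun_swap).
Qed.

Lemma rank_ker_edge_vertex_mx_tr : (\rank (kermx edge_vertex_mx^T) <= 1)%N.
Proof.
apply: rank_kermx_le1 => w w0 x x'; rewrite -(enum_valK x) -(enum_valK x').
have edge_eq a b : adj a b -> w 0 (enum_rank a) = w 0 (enum_rank b).
  move=> ab; have /dart_edge_rep [[e1 e2] eE de] : dart (a, b) by rewrite inE.
  have /eqP := edge_vertex_mx_tr_mul w (enum_rank_in eE (e1, e2)).
  rewrite w0 mxE eq_sym F2_add_eq0 enum_rankK_in // => /eqP.
  by case: de => -[-> ->] ->.
have /connectP [p pth ->] := connected (enum_val x) (enum_val x').
elim: p (enum_val x) pth => //= y p IHp a /andP[ay pth].
by rewrite (edge_eq _ _ ay); apply: IHp.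
Qed.

(* The dual form of "the cycle space of a plane graph is spanned by its face
   boundaries": by Euler's formula the F_2 chain complex
   faces -> edges -> vertices is exact at edges. *)
Lemma even_subgraph_face_cut (E : rel T) :
  symmetric E -> (forall x, ~~ odd #|[set y | adj x y && E x y]|) ->
  exists g : T * T -> bool,
    (forall d, dart d -> g (fp d) = g d) /\
    (forall d, dart d -> g (swap_pair d) = g d (+) E d.1 d.2).
Proof.
move=> Esym Eeven.
pose h : 'rV['F_2]_#|edge_reps| :=
  \row_j F2b (E (enum_val j : T * T).1 (enum_val j : T * T).2).
have hA : h *m edge_vertex_mx = 0.
  apply/rowP => x; rewrite !mxE; set y := enum_val x.
  have -> : \sum_j h 0 j * edge_vertex_mx j x =
            \sum_(d in darts adj) F2b (E d.1 d.2) * F2b (d.1 == y).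
    rewrite sum_darts_edge_reps (big_enum_val (A := mem edge_reps)) /=.
    by apply: eq_bigr => j _; rewrite !mxE mulrDr (Esym (enum_val j).2).
  rewrite (bigID (fun d : T * T => d.1 == y)) /= [X in _ + X]big1 ?addr0; last first.
    by move=> d /andP[_ /negbTE ->]; rewrite mulr0.
  rewrite (reindex_onto (pair y) snd) /=; last by move=> [a b] /andP[_ /eqP /= ->].
  rewrite (eq_bigl (adj y)); last by move=> z; rewrite inE /= !eqxx !andbT.
  have card_E : (\sum_(z | adj y z) E y z)%N = #|[set z | adj y z && E y z]|.
    rewrite -sum1_card big_mkcond [RHS]big_mkcond /=.
    by apply: eq_bigr => z _; rewrite inE; case: (adj y z); case: (E y z).
  rewrite (eq_bigr (fun z => F2b (E y z))) => [|z _]; last by rewrite eqxx mulr1.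
  by rewrite -natr_sum card_E -(Fp_nat_mod (isT : prime 2)) modn2 (negbTE (Eeven y)).
have [u hu] : exists u, h = u *m face_edge_mx.
  apply/submxP; apply: submx_trans (kermx_sub_euler mul_face_edge_vertex_mx
    rank_ker_face_edge_mx rank_ker_edge_vertex_mx_tr _); first exact/sub_kermxP.
  by move: euler; rewrite card_darts; lia.
exists (fun d => face_fun u d == 1).
split=> [d dd|d /dart_edge_rep[e eE de]]; first by rewrite face_fun_faceperm.
have := face_edge_mx_mul u (enum_rank_in eE e).
rewrite -hu mxE enum_rankK_in // => /esym/F2_add_F2b gswap.
by case: de => ->; rewrite ?swap_pairK /= ?gswap // Esym addbK.
Qed.

End FaceCut.

Hypothesis face_card56 :
  forall d, dart d -> (#|face_of rot d| == 5) || (#|face_of rot d| == 6).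
Hypothesis face_simple : forall d, dart d -> #|face_verts rot d| = #|face_of rot d|.

Lemma iter_faceperm_fst_inj d m n : dart d ->
  m < #|face_of rot d| -> n < #|face_of rot d| ->
  (iter m fp d).1 = (iter n fp d).1 -> m = n.
Proof.
move=> dd lt_m lt_n fst_eq; apply: iter_faceperm_inj lt_m lt_n _.
have /imset_injP fst_inj : #|[set e.1 | e in face_of rot d]| == #|face_of rot d|.
  by apply/eqP/face_simple.
by apply: fst_inj; rewrite ?iter_faceperm_face.
Qed.

Lemma face_card6 d : dart d -> (iter 5 fp d).1 != d.1 -> #|face_of rot d| = 6.
Proof.
move=> dd; case/orP: (face_card56 dd) => /eqP n_d //.
by rewrite -n_d iter_face_card ?eqxx.
Qed.

Lemma face_verts_traject d n x :
  x \in map fst (traject fp d n) -> x \in face_verts rot d.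
Proof. by case/mapP => e /face_traject e_d ->; apply: imset_f. Qed.

(** * Perfect star packings *)

Section StarPacking.
Variable s : rel T.
Hypothesis psp : perfect_star_packing adj s.

Lemma star_center x : exists c, [/\ connect s x c,
  forall y, connect s x y -> (y \in centers s) = (y == c)
  & forall y, connect s x y -> y != c -> s y c].
Proof.
case: psp => _ _ /(_ x) [c [cK K4 sK]]; set K := [set z | connect s x z] in cK K4 sK.
have sK' y z : connect s x y -> connect s x z -> s y z = (y == c) (+) (z == c).
  by move=> xy xz; apply: sK; rewrite inE.
rewrite inE in cK; exists c; split=> // [y xy|y xy yc]; last first.
  by rewrite sK' // eqxx (negbTE yc).
rewrite inE; have -> : [set z | s y z] = [set z in K | (y == c) (+) (z == c)].
  apply/setP => z; rewrite !inE; apply/idP/andP => [yz|[xz]]; last by rewrite sK'.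
  have xz : connect s x z := connect_trans xy (connect1 yz).
  by rewrite -sK'.
have [_ | _] := eqVneq y c.
  have -> : [set z in K | true (+) (z == c)] = K :\ c.
    by apply/setP => z; rewrite !inE andbC.
  by have := K4; rewrite (cardsD1 c) inE cK add1n => /succn_inj ->.
have -> : [set z in K | false (+) (z == c)] = [set c].
  by apply/setP => z; rewrite !inE andbC; case: eqP => // ->.
by rewrite cards1.
Qed.

Lemma center_connect c c' :
  c \in centers s -> c' \in centers s -> connect s c c' -> c = c'.
Proof.
move=> cc cc' cc'_conn; have [z [_ cen_z _]] := star_center c.
move: (cen_z c (connect0 _ _)) (cen_z c' cc'_conn); rewrite cc cc'.
by move=> /esym/eqP -> /esym/eqP ->.
Qed.

Lemma center_nbr_s c y : c \in centers s -> adj c y -> s c y.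
Proof.
rewrite inE => /eqP s3 cy.
have sub : [set z | s c z] \subset [set z | adj c z].
  by apply/subsetP => z; rewrite !inE; case: psp => _ sadj _; apply: sadj.
have [_] := subset_leqif_cards sub; rewrite s3 cubic eqxx => /esym/eqP/setP/(_ y).
by rewrite !inE cy.
Qed.

Lemma centers_nadj c c' : c \in centers s -> c' \in centers s -> ~~ adj c c'.
Proof.
move=> cc cc'; apply/negP => cc'_adj.
have := center_connect cc cc' (connect1 (center_nbr_s cc cc'_adj)).
by move=> e; move: cc'_adj; rewrite e adj_irr.
Qed.

Lemma center_common_nbr c c' y :
  c \in centers s -> c' \in centers s -> adj c y -> adj c' y -> c = c'.
Proof.
move=> cc cc' cy c'y; apply: center_connect => //.
apply: connect_trans (connect1 (center_nbr_s cc cy)) (connect1 _).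
by case: psp => ssym _ _; rewrite ssym center_nbr_s.
Qed.

Lemma center_nbr x : x \notin centers s -> exists2 c, c \in centers s & adj x c.
Proof.
move=> xnc; have [c [xc cen_c s_c]] := star_center x.
have cc : c \in centers s by rewrite cen_c ?eqxx.
have xnec : x != c by rewrite -cen_c ?connect0.
by exists c => //; case: psp => _ sadj _; apply/sadj/s_c; rewrite ?connect0.
Qed.

Lemma face_card5 d : dart d ->
  d.1 \in centers s -> (iter 4 fp d).2 \in centers s -> #|face_of rot d| = 5.
Proof.
move=> dd c_first c_last; case/orP: (face_card56 dd) => /eqP n_d //.
have := adj_iter_faceperm 5 dd; rewrite -n_d iter_face_card //.
by rewrite (negbTE (centers_nadj c_last c_first)).
Qed.

Lemma spoke_face_hexagon a b ua ub :
  adj a ua -> adj b ub -> ua \in centers s -> ub \in centers s ->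
  rot a ua = b -> rot b a = ub ->
  [/\ iter 2 fp (ua, a) = (b, ub), ua != ub & #|face_of rot (ua, a)| = 6].
Proof.
move=> aua bub cua cub r_ua r_b; set E := (ua, a).
have dE : dart E by rewrite inE adj_sym.
have E2 : iter 2 fp E = (b, ub) by rewrite /= /faceperm /= r_ua r_b.
have E3 : (iter 3 fp E).1 = ub by rewrite -[iter 3 fp E]/(fp (iter 2 fp E)) E2.
have ne : ua != ub.
  apply/eqP => eq_u; suff: 3 = 0 by [].
  apply: (iter_faceperm_fst_inj dE); rewrite ?E3 ?face_card_gt0 //.
  by case/orP: (face_card56 dE) => /eqP ->.
split => //; case/orP: (face_card56 dE) => /eqP n_E //; exfalso.
have := adj_iter_faceperm 4 dE; rewrite -n_E iter_face_card // => a45.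
have := adj_iter_faceperm 3 dE; rewrite E3 => a34.
by move/eqP: ne; apply; apply: (center_common_nbr cua cub _ a34); rewrite adj_sym.
Qed.

(* Along the face of (a, ua), the center ub is at distance >= 3 from ua, and
   b and then pa (which precedes a) still have to follow it: more than 6 darts. *)
Lemma spoke_faces_distinct a b ua ub pa :
  adj a pa -> adj a b -> ua \in centers s -> ub \in centers s ->
  a \notin centers s -> ua != ub -> rot a pa = ua -> rot a ua = b ->
  (ub, b) \notin face_of rot (a, ua).
Proof.
move=> apa ab cua cub nca ne r_pa r_ua.
have dD : dart (a, ua) by rewrite inE /= -r_pa rot_adj.
apply/negP => /face_of_iter [j lt_j hj]; set n := #|face_of rot (a, ua)| in lt_j.
have n_le6 : n <= 6 by rewrite /n; case/orP: (face_card56 dD) => /eqP ->.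
have j_gt3 : 3 < j.
  have : (iter j fp (a, ua)).1 = ub by rewrite -hj.
  case: j {lt_j hj} => [|[|[|[|j]]]] // vj.
  - by move: cub; rewrite -vj /= (negbTE nca).
  - by move: ne; rewrite -vj /= eqxx.
  - by have := adj_iter_faceperm 1 dD; rewrite vj (negbTE (centers_nadj cua cub)).
  have a12 := adj_iter_faceperm 1 dD; have := adj_iter_faceperm 2 dD; rewrite vj => a23.
  exfalso; move/eqP: ne; apply.
  apply: (center_common_nbr cua cub (y := (iter 2 fp (a, ua)).1)) => //.
  by rewrite adj_sym.
have pred_D : iter n.-1 fp (a, ua) = (pa, a).
  by rewrite iter_face_card_pred // /faceperm_inv /= -r_pa rot3.
have j_last : j != n.-1.
  by apply/eqP => jn; move: hj; rewrite jn pred_D => -[_ ba]; move: ab; rewrite ba adj_irr.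
have j_next : j.+1 != n.-1.
  apply/eqP => jn; move: pred_D; rewrite -jn iterS -hj => -[b_pa _].
  by move: (rot2_neq apa); rewrite r_pa r_ua b_pa eqxx.
lia.
Qed.

Lemma spoke_pair_face a b ua ub pa :
  adj a pa -> adj a b -> adj b ub -> ua \in centers s -> ub \in centers s ->
  a \notin centers s -> rot a pa = ua -> rot a ua = b -> rot b a = ub ->
  (exists2 d, dart d & face_has_edge rot d a ua && face_has_edge rot d b ub) /\
  (forall d, dart d -> face_has_edge rot d a ua -> face_has_edge rot d b ub ->
     #|face_of rot d| = 6 /\
     exists2 e, e \in face_of rot d &
       (e.1 \in centers s) && ((iter 3 fp e).1 \in centers s)).
Proof.
move=> apa ab bub cua cub nca r_pa r_ua r_b.
have aua : adj a ua by rewrite -r_pa rot_adj.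
have [E2 ne hexE] := spoke_face_hexagon aua bub cua cub r_ua r_b.
have dE : dart (ua, a) by rewrite inE adj_sym.
have E_E := iter_faceperm_face 0 (ua, a).
have E_b : (b, ub) \in face_of rot (ua, a) by rewrite -E2 iter_faceperm_face.
split; first by exists (ua, a); rewrite // /face_has_edge E_E E_b orbT.
move=> d dd /orP[aD|/(face_of_eq dd) face_d] h_b; last first.
  rewrite -face_d; split => //; exists (ua, a) => //.
  by rewrite cua -[iter 3 fp _]/(fp (iter 2 fp (ua, a))) E2 cub.
have nD := spoke_faces_distinct apa ab cua cub nca ne r_pa r_ua.
case/orP: h_b => [/(face_of_eq dd) bD|ubD]; last first.
  by move: nD; rewrite (face_of_eq dd aD) ubD.
rewrite -bD (face_of_eq dE E_b); split => //; exists (ua, a) => //.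
by rewrite cua -[iter 3 fp _]/(fp (iter 2 fp (ua, a))) E2 cub.
Qed.

(** * Cycles avoiding the centers *)

Section CycleAvoidingCenters.
Variables (k : nat) (v : 'I_k -> T).
Hypothesis cyc : is_cycle adj v.
Hypothesis v_noncenter : forall i, v i \notin centers s.

Local Notation same_side := (same_side adj rot v).

Lemma cycle_inj : injective v. Proof. by case: cyc. Qed.

Lemma cycle_adj i : adj (v i) (v (ordS i)). Proof. by case: cyc. Qed.

Lemma cycle_adj_pred i : adj (v i) (v (ord_pred i)).
Proof. by rewrite adj_sym; have := cycle_adj (ord_pred i); rewrite ord_predK. Qed.

Lemma cycle_succ_neq_pred i : v (ordS i) != v (ord_pred i).
Proof. by rewrite (inj_eq cycle_inj) ordS_neq_pred //; case: cyc. Qed.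

Lemma on_cycle_v i : on_cycle v (v i). Proof. by apply/existsP; exists i. Qed.

Lemma on_cycle_edge_sym : symmetric (on_cycle_edge v).
Proof. by move=> x y; apply: eq_existsb => i; rewrite orbC. Qed.

Lemma on_cycle_edge_v i z :
  on_cycle_edge v (v i) z = (z == v (ordS i)) || (z == v (ord_pred i)).
Proof.
apply/existsP/orP => [[j /orP[]/andP[/eqP e1 /eqP e2]]|[/eqP ->|/eqP ->]].
- by left; rewrite e2 (cycle_inj e1).
- by right; rewrite e1 (cycle_inj e2) ordSK.
- by exists i; rewrite !eqxx.
- by exists (ord_pred i); rewrite ord_predK !eqxx orbT.
Qed.

Lemma on_cycle_edge_off x z : ~~ on_cycle v x -> on_cycle_edge v x z = false.
Proof.
move=> xoff; apply/existsP => -[j /orP[/andP[/eqP xj _]|/andP[_ /eqP xj]]];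
  by move: xoff; rewrite xj on_cycle_v.
Qed.

Lemma cycle_nbrs_even x : ~~ odd #|[set y | adj x y && on_cycle_edge v x y]|.
Proof.
have [/existsP[i /eqP <-]|xoff] := boolP (on_cycle v x); last first.
  have -> : [set y | adj x y && on_cycle_edge v x y] = set0.
    by apply/setP => y; rewrite !inE on_cycle_edge_off ?andbF.
  by rewrite cards0.
have -> : [set y | adj (v i) y && on_cycle_edge v (v i) y] =
          [set v (ordS i); v (ord_pred i)].
  apply/setP => y; rewrite !inE on_cycle_edge_v.
  case: eqP => [->|_]; rewrite ?cycle_adj //.
  by case: eqP => [->|_]; rewrite ?cycle_adj_pred ?andbF.
by rewrite cards2 cycle_succ_neq_pred.
Qed.

Lemma cycle_sides_differ i : ~~ same_side (v i, v (ordS i)) (v (ordS i), v i).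
Proof.
have [g [g_fp g_swap]] := even_subgraph_face_cut on_cycle_edge_sym cycle_nbrs_even.
have g_step d e : side_step adj rot v d e -> g e = g d.
  case/and3P => dd _ /orP[/eqP ->|/andP[/eqP -> off]]; first exact: g_fp.
  by rewrite g_swap // (negbTE off) addbF.
have g_side d e : same_side d e -> g d = g e.
  case/connectP => p; elim: p d => [|d' p IHp] d /= => [_ -> //|/andP[st pth] e_last].
  by rewrite -(g_step _ _ st); apply: IHp.
have dd : dart (v i, v (ordS i)) by rewrite inE cycle_adj.
apply/negP => /g_side; rewrite -[(v (ordS i), v i)]/(swap_pair (v i, v (ordS i))).
by rewrite g_swap //= on_cycle_edge_v eqxx addbT; case: (g _).
Qed.

Lemma same_side_iter n d : dart d -> same_side d (iter n fp d).
Proof.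
move=> dd; elim: n => [|n IHn]; first exact: connect0.
apply: connect_trans IHn (connect1 _).
by rewrite /side_step !iter_faceperm_dart //= eqxx.
Qed.

Lemma same_side_swap d :
  dart d -> ~~ on_cycle_edge v d.1 d.2 -> same_side d (swap_pair d).
Proof. by move=> dd off; apply: connect1; rewrite /side_step swap_dart dd eqxx off orbT. Qed.

Lemma same_side_sym : connect_sym (side_step adj rot v).
Proof.
have step_sym d e : side_step adj rot v d e -> same_side e d.
  case/and3P => dd _ /orP[/eqP ->|/andP[/eqP -> off]].
    have := same_side_iter #|face_of rot d|.-1 (faceperm_dart dd).
    by rewrite -iterSr prednK ?face_card_gt0 // iter_face_card.
  have := @same_side_swap (swap_pair d); rewrite swap_pairK swap_dart /=.
  by rewrite on_cycle_edge_sym; apply.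
have sym d e : same_side d e -> same_side e d.
  case/connectP => p; elim: p d => [|d' p IHp] d /= => [_ ->|/andP[st pth] e_last].
    exact: connect0.
  exact: connect_trans (IHp _ pth e_last) (step_sym _ _ st).
by move=> d e; apply/idP/idP => /sym.
Qed.

Lemma same_side_nbr x y z :
  ~~ on_cycle v x -> adj x y -> adj x z -> same_side (x, y) (x, z).
Proof.
move=> xoff xy /(rot_orbit xy) [n <-]; elim: n => [|n IHn] /=; first exact: connect0.
have xw := iter_rot_adj n xy; set w := iter n (rot x) y in xw IHn *.
have dxw : dart (x, w) by rewrite inE.
have xw_wx : same_side (x, w) (w, x) by apply: same_side_swap; rewrite ?on_cycle_edge_off.
apply: connect_trans IHn (connect_trans xw_wx _).
by apply: (same_side_iter 1); rewrite inE adj_sym.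
Qed.

(* u_i; the default [v i] is never used, see [spoke_spec]. *)
Definition spoke i := odflt (v i) [pick c in centers s | adj (v i) c].

Lemma spoke_spec i : spoke i \in centers s /\ adj (v i) (spoke i).
Proof.
rewrite /spoke; case: pickP => [c /andP[]//|no_center] /=.
have [c cc vc] := center_nbr (v_noncenter i).
by move: (no_center c); rewrite cc vc.
Qed.

Lemma spoke_center i : spoke i \in centers s. Proof. by case: (spoke_spec i). Qed.

Lemma adj_spoke i : adj (v i) (spoke i). Proof. by case: (spoke_spec i). Qed.

Lemma spoke_dart i : dart (spoke i, v i). Proof. by rewrite inE adj_sym adj_spoke. Qed.

Lemma spoke_off i : ~~ on_cycle v (spoke i).
Proof. by apply/existsP => -[j /eqP vj]; have := v_noncenter j; rewrite vj spoke_center. Qed.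

Lemma spoke_neq i j : spoke i != v j.
Proof. by apply: contraNneq (spoke_off i) => ->; apply: on_cycle_v. Qed.

Lemma cycle_nbr_cases i z : adj (v i) z ->
  [\/ z = v (ord_pred i), z = v (ordS i) | z = spoke i].
Proof.
apply: cubic_nbr_cases; rewrite ?cycle_adj_pred ?cycle_adj ?adj_spoke //.
- by rewrite eq_sym cycle_succ_neq_pred.
- by rewrite eq_sym spoke_neq.
- by rewrite eq_sym spoke_neq.
Qed.

Lemma off_cycle_nbr i u : adj (v i) u -> ~~ on_cycle_edge v (v i) u -> u = spoke i.
Proof. by case/cycle_nbr_cases => // ->; rewrite on_cycle_edge_v eqxx ?orbT. Qed.

(* Whether the rotation at v_i is (v_{i-1}, u_i, v_{i+1}) rather than
   (v_{i-1}, v_{i+1}, u_i); by [same_side_spoke_type] it tells the side of e_i. *)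
Definition rot_to_spoke i := rot (v i) (v (ord_pred i)) == spoke i.

Lemma rot_cycle i : [/\
  rot (v i) (v (ord_pred i)) = if rot_to_spoke i then spoke i else v (ordS i),
  rot (v i) (v (ordS i)) = if rot_to_spoke i then v (ord_pred i) else spoke i
  & rot (v i) (spoke i) = if rot_to_spoke i then v (ordS i) else v (ord_pred i)].
Proof.
rewrite /rot_to_spoke; have vp := cycle_adj_pred i.
have [r1|ne1] := eqVneq; last first.
  have r1 : rot (v i) (v (ord_pred i)) = v (ordS i).
    case: (cycle_nbr_cases (rot_adj vp)) => // r1;
      [move: (rot_neq vp) | move: ne1]; by rewrite r1 eqxx.
  have r2 : rot (v i) (v (ordS i)) = spoke i.
    case: (cycle_nbr_cases (rot_adj (cycle_adj i))) => // r2.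
      by move: (rot2_neq vp); rewrite r1 r2 eqxx.
    by move: (rot_neq (cycle_adj i)); rewrite r2 eqxx.
  by split => //; rewrite -r2 -r1 rot3.
have r2 : rot (v i) (spoke i) = v (ordS i).
  case: (cycle_nbr_cases (rot_adj (adj_spoke i))) => // r2.
    by move: (rot2_neq vp); rewrite r1 r2 eqxx.
  by move: (rot_neq (adj_spoke i)); rewrite r2 eqxx.
by split => //; rewrite -r2 -r1 rot3.
Qed.

Lemma faceperm_spoke i :
  fp (spoke i, v i) = (v i, if rot_to_spoke i then v (ordS i) else v (ord_pred i)).
Proof. by case: (rot_cycle i) => _ _ r; rewrite /faceperm /= r. Qed.

Lemma faceperm_fwd i : fp (v i, v (ordS i)) =
  (v (ordS i), if rot_to_spoke (ordS i) then spoke (ordS i) else v (ordS (ordS i))).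
Proof. by case: (rot_cycle (ordS i)) => r _ _; rewrite /faceperm /= -r ordSK. Qed.

Lemma faceperm_bwd i :
  fp (v (ordS i), v i) = (v i, if rot_to_spoke i then v (ord_pred i) else spoke i).
Proof. by case: (rot_cycle i) => _ r _; rewrite /faceperm /= r. Qed.

Lemma same_side_out_spoke i :
  same_side (v i, spoke i) (v i, if rot_to_spoke i then v (ordS i) else v (ord_pred i)).
Proof.
have dvs : dart (v i, spoke i) by rewrite inE adj_spoke.
apply: connect_trans (same_side_swap dvs _) _.
  by rewrite /= on_cycle_edge_v !(negbTE (spoke_neq _ _)).
by rewrite -faceperm_spoke; apply: (same_side_iter 1 (spoke_dart i)).
Qed.

Lemma same_side_fwd i j : same_side (v i, v (ordS i)) (v j, v (ordS j)).
Proof.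
move: j; apply: (ordS_ind (connect0 _ _)) => j /connect_trans; apply.
have dj : dart (v j, v (ordS j)) by rewrite inE cycle_adj.
apply: connect_trans (same_side_iter 1 dj) _; rewrite /= faceperm_fwd.
case: ifP => t_Sj; last exact: connect0.
by have := same_side_out_spoke (ordS j); rewrite t_Sj.
Qed.

Lemma same_side_bwd i j : same_side (v (ordS i), v i) (v (ordS j), v j).
Proof.
move: j; apply: (ordS_ind (connect0 _ _)) => j /connect_trans; apply.
rewrite same_side_sym.
have dj : dart (v (ordS (ordS j)), v (ordS j)) by rewrite inE adj_sym cycle_adj.
apply: connect_trans (same_side_iter 1 dj) _; rewrite /= faceperm_bwd ordSK.
case: ifP => t_Sj; first exact: connect0.
by have := same_side_out_spoke (ordS j); rewrite t_Sj ordSK.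
Qed.

Lemma same_side_fwd_bwd i j : ~~ same_side (v i, v (ordS i)) (v (ordS j), v j).
Proof.
apply: contra (cycle_sides_differ j); apply: connect_trans.
exact: same_side_fwd.
Qed.

Lemma same_side_nbr_spoke d i :
  has_nbr_in_side adj rot v d (v i) -> same_side d (spoke i, v i).
Proof.
case=> y [vy /andP[yoff /existsP[z /andP[yz dyz]]]].
have y_spoke : y = spoke i.
  by case: (cycle_nbr_cases vy) => // y_v; rewrite y_v on_cycle_v in yoff.
rewrite -y_spoke; apply: connect_trans dyz (same_side_nbr yoff yz _).
by rewrite adj_sym.
Qed.

Lemma same_side_spoke_type d d' i j :
  has_nbr_in_side adj rot v d (v i) -> has_nbr_in_side adj rot v d' (v j) ->
  same_side d d' = (rot_to_spoke i == rot_to_spoke j).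
Proof.
have side_rep l : same_side (spoke l, v l) (if rot_to_spoke l then (v l, v (ordS l))
                    else (v (ordS (ord_pred l)), v (ord_pred l))).
  rewrite ord_predK; apply: connect_trans (same_side_iter 1 (spoke_dart l)) _.
  by rewrite /= faceperm_spoke; case: ifP => _; apply: connect0.
move=> /same_side_nbr_spoke/connect_trans/(_ (side_rep i)) di.
move=> /same_side_nbr_spoke/connect_trans/(_ (side_rep j)) dj.
rewrite /same_side (same_connect same_side_sym di) same_side_sym.
rewrite (same_connect same_side_sym dj).
case: (rot_to_spoke i); case: (rot_to_spoke j) => /=.
- exact: same_side_fwd.
- by apply/negbTE; rewrite same_side_sym; apply: same_side_fwd_bwd.
- exact: negbTE (same_side_fwd_bwd _ _).
- exact: same_side_bwd.
Qed.

Lemma spoke_type_eq d i j :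
  has_nbr_in_side adj rot v d (v i) -> has_nbr_in_side adj rot v d (v j) ->
  rot_to_spoke j = rot_to_spoke i.
Proof.
by move=> hi hj; have := same_side_spoke_type hi hj; rewrite /same_side connect0 => /esym/eqP.
Qed.

Lemma spoke_type_opp d d' i j : ~~ same_side d d' ->
  has_nbr_in_side adj rot v d (v i) -> has_nbr_in_side adj rot v d' (v j) ->
  rot_to_spoke j = ~~ rot_to_spoke i.
Proof.
move=> dd' hi hj; move: dd'; rewrite (same_side_spoke_type hi hj).
by case: (rot_to_spoke _); case: (rot_to_spoke _).
Qed.

Lemma pentagon_across d1 d2 i : ~~ same_side d1 d2 ->
  has_nbr_in_side adj rot v d1 (v i) ->
  has_nbr_in_side adj rot v d1 (v (ordS i)) ->
  has_nbr_in_side adj rot v d2 (v (ord_pred i)) ->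
  has_nbr_in_side adj rot v d2 (v (ordS (ordS i))) ->
  exists2 d, dart d & #|face_of rot d| = 5 /\
    {subset [:: v (ord_pred i); v i; v (ordS i); v (ordS (ordS i))] <= face_verts rot d}.
Proof.
have [m ->] : exists m, i = ordS m by exists (ord_pred i); rewrite ord_predK.
rewrite ordSK; set i1 := ordS m; set i2 := ordS i1; set i3 := ordS i2.
move=> d12 h1 h2 h0 h3; have t2 := spoke_type_eq h1 h2; have t0 := spoke_type_opp d12 h1 h0.
have t3 := spoke_type_eq h0 h3; rewrite t0 in t3.
case t1: (rot_to_spoke i1) in t0 t2 t3.
  exists (spoke i3, v i3); first exact: spoke_dart.
  have walk : traject fp (spoke i3, v i3) 5 =
      [:: (spoke i3, v i3); (v i3, v i2); (v i2, v i1); (v i1, v m); (v m, spoke m)].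
    rewrite /= faceperm_spoke t3 ordSK faceperm_bwd t2 ordSK.
    by rewrite faceperm_bwd t1 ordSK faceperm_bwd t0.
  split.
    apply: face_card5; rewrite ?spoke_dart ?spoke_center //.
    by rewrite -(nth_traject _ (isT : 4 < 5)) walk spoke_center.
  move=> x x_in; apply: (face_verts_traject (n := 5)); rewrite walk.
  by move: x_in; rewrite !inE => /or4P[] /eqP ->; rewrite eqxx ?orbT.
exists (spoke m, v m); first exact: spoke_dart.
have walk : traject fp (spoke m, v m) 5 =
    [:: (spoke m, v m); (v m, v i1); (v i1, v i2); (v i2, v i3); (v i3, spoke i3)].
  by rewrite /= faceperm_spoke t0 faceperm_fwd t1 faceperm_fwd t2 faceperm_fwd t3.
split.
  apply: face_card5; rewrite ?spoke_dart ?spoke_center //.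
  by rewrite -(nth_traject _ (isT : 4 < 5)) walk spoke_center.
move=> x x_in; apply: (face_verts_traject (n := 5)); rewrite walk.
by move: x_in; rewrite !inE => /or4P[] /eqP ->; rewrite eqxx ?orbT.
Qed.

Lemma hexagon_across d1 d2 i : ~~ same_side d1 d2 ->
  has_nbr_in_side adj rot v d1 (v i) ->
  has_nbr_in_side adj rot v d1 (v (ordS i)) ->
  has_nbr_in_side adj rot v d1 (v (ordS (ordS i))) ->
  has_nbr_in_side adj rot v d2 (v (ord_pred i)) ->
  has_nbr_in_side adj rot v d2 (v (ordS (ordS (ordS i)))) ->
  exists2 d, dart d & #|face_of rot d| = 6 /\
    {subset [:: v (ord_pred i); v i; v (ordS i); v (ordS (ordS i));
                v (ordS (ordS (ordS i)))] <= face_verts rot d}.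
Proof.
have [m ->] : exists m, i = ordS m by exists (ord_pred i); rewrite ord_predK.
rewrite ordSK; set i1 := ordS m; set i2 := ordS i1; set i3 := ordS i2; set i4 := ordS i3.
move=> d12 h1 h2 h3 h0 h4; have t2 := spoke_type_eq h1 h2; have t3 := spoke_type_eq h1 h3.
have t0 := spoke_type_opp d12 h1 h0; have t4 := spoke_type_eq h0 h4; rewrite t0 in t4.
case t1: (rot_to_spoke i1) in t0 t2 t3 t4.
  exists (spoke i4, v i4); first exact: spoke_dart.
  have walk : traject fp (spoke i4, v i4) 6 = [:: (spoke i4, v i4); (v i4, v i3);
      (v i3, v i2); (v i2, v i1); (v i1, v m); (v m, spoke m)].
    rewrite /= faceperm_spoke t4 ordSK faceperm_bwd t3 ordSK faceperm_bwd t2 ordSK.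
    by rewrite faceperm_bwd t1 ordSK faceperm_bwd t0.
  split.
    apply: face_card6; first exact: spoke_dart.
    by rewrite -(nth_traject _ (isT : 5 < 6)) walk /= eq_sym spoke_neq.
  move=> x x_in; apply: (face_verts_traject (n := 6)); rewrite walk.
  by move: x_in; rewrite !inE => /or4P[| | |/orP[]] /eqP ->; rewrite eqxx ?orbT.
exists (spoke m, v m); first exact: spoke_dart.
have walk : traject fp (spoke m, v m) 6 = [:: (spoke m, v m); (v m, v i1);
    (v i1, v i2); (v i2, v i3); (v i3, v i4); (v i4, spoke i4)].
  by rewrite /= faceperm_spoke t0 faceperm_fwd t1 faceperm_fwd t2 faceperm_fwd t3 faceperm_fwd t4.
split.
  apply: face_card6; first exact: spoke_dart.
  by rewrite -(nth_traject _ (isT : 5 < 6)) walk /= eq_sym spoke_neq.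
move=> x x_in; apply: (face_verts_traject (n := 6)); rewrite walk.
by move: x_in; rewrite !inE => /or4P[| | |/orP[]] /eqP ->; rewrite eqxx ?orbT.
Qed.

Lemma spoke_pair_across d0 i u u' :
  has_nbr_in_side adj rot v d0 (v i) ->
  has_nbr_in_side adj rot v d0 (v (ordS i)) ->
  adj (v i) u -> ~~ on_cycle_edge v (v i) u ->
  adj (v (ordS i)) u' -> ~~ on_cycle_edge v (v (ordS i)) u' ->
  (exists2 d, dart d &
     face_has_edge rot d (v i) u && face_has_edge rot d (v (ordS i)) u') /\
  (forall d, dart d ->
     face_has_edge rot d (v i) u -> face_has_edge rot d (v (ordS i)) u' ->
     #|face_of rot d| = 6 /\
     exists2 e, e \in face_of rot d &
       (e.1 \in centers s) && ((iter 3 fp e).1 \in centers s)).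
Proof.
move=> h0 h1 vu /(off_cycle_nbr vu) -> vu' /(off_cycle_nbr vu') ->.
have t1 := spoke_type_eq h0 h1.
case: (rot_cycle i) (rot_cycle (ordS i)); rewrite ordSK t1.
case: (rot_to_spoke i) => [r_p _ r_u [r_p' _ _]|_ r_n _ [_ r_n' r_u']].
  exact: spoke_pair_face (cycle_adj_pred i) (cycle_adj i) (adj_spoke _)
           (spoke_center i) (spoke_center _) (v_noncenter i) r_p r_u r_p'.
have vSi : adj (v (ordS i)) (v i) by rewrite adj_sym cycle_adj.
have [[d dd d_edges] d_hex] := spoke_pair_face (cycle_adj (ordS i)) vSi (adj_spoke i)
  (spoke_center (ordS i)) (spoke_center i) (v_noncenter (ordS i)) r_n' r_u' r_n.
split=> [|d' dd' e_i e_Si]; first by exists d; rewrite // andbC.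
exact: d_hex.
Qed.

End CycleAvoidingCenters.
End StarPacking.
End PlaneCubicGraph.

Theorem mainTheorem9 (T : finType) (adj : rel T) (rot : T -> T -> T)
    (s : rel T) (k : nat) (v : 'I_k -> T) :
  fullerene adj rot ->
  perfect_star_packing adj s ->
  is_cycle adj v ->
  (forall i, v i \notin centers s) ->
  non_facial adj rot v ->
  (* d1, d2 : darts on the two (distinct) sides H_1, H_2 of C (either order) *)
  (forall d1 d2 : T * T, d1 \in darts adj -> d2 \in darts adj ->
     ~~ same_side adj rot v d1 d2 ->
     forall i : 'I_k,
       (* (i) *)
       (has_nbr_in_side adj rot v d1 (v i) ->
        has_nbr_in_side adj rot v d1 (v (ordS i)) ->
        has_nbr_in_side adj rot v d2 (v (ord_pred i)) ->
        has_nbr_in_side adj rot v d2 (v (ordS (ordS i))) ->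
        exists2 d, d \in darts adj &
          #|face_of rot d| = 5 /\
          {subset [:: v (ord_pred i); v i; v (ordS i); v (ordS (ordS i))]
             <= face_verts rot d}) /\
       (* (ii) *)
       (has_nbr_in_side adj rot v d1 (v i) ->
        has_nbr_in_side adj rot v d1 (v (ordS i)) ->
        has_nbr_in_side adj rot v d1 (v (ordS (ordS i))) ->
        has_nbr_in_side adj rot v d2 (v (ord_pred i)) ->
        has_nbr_in_side adj rot v d2 (v (ordS (ordS (ordS i)))) ->
        exists2 d, d \in darts adj &
          #|face_of rot d| = 6 /\
          {subset [:: v (ord_pred i); v i; v (ordS i); v (ordS (ordS i));
                      v (ordS (ordS (ordS i)))] <= face_verts rot d})) /\
  (* (iii) : d0 is a dart on the side H_j *)
  (forall d0 : T * T, d0 \in darts adj ->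
     forall (i : 'I_k) (u u' : T),
       has_nbr_in_side adj rot v d0 (v i) ->
       has_nbr_in_side adj rot v d0 (v (ordS i)) ->
       (* e_i = v_i u and e_{i+1} = v_{i+1} u' are the edges not on C *)
       adj (v i) u -> ~~ on_cycle_edge v (v i) u ->
       adj (v (ordS i)) u' -> ~~ on_cycle_edge v (v (ordS i)) u' ->
       (exists2 d, d \in darts adj &
          face_has_edge rot d (v i) u && face_has_edge rot d (v (ordS i)) u') /\
       (forall d, d \in darts adj ->
          face_has_edge rot d (v i) u -> face_has_edge rot d (v (ordS i)) u' ->
          #|face_of rot d| = 6 /\
          exists2 e, e \in face_of rot d &
            (e.1 \in centers s) && ((iter 3 (faceperm rot) e).1 \in centers s))).
Proof.
move=> [[irr sym cubic conn [r_adj r_inj r_orbit]] [euler f56 fsimple]] psp cyc noc _.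
split=> [d1 d2 _ _ d12 i|d0 _ i u u']; first split.
- exact: (pentagon_across irr sym cubic conn r_adj r_inj r_orbit euler f56 psp cyc noc d12).
- exact: (hexagon_across irr sym cubic conn r_adj r_inj r_orbit euler f56 psp cyc noc d12).
- exact: (spoke_pair_across irr sym cubic conn r_adj r_inj r_orbit euler f56 fsimple psp cyc noc).
Qed.
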